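(* Let $(\mathcal{M},\mathcal{L})$ be a regular symplectic pair with $\mathcal{M},\mathcal{L}\in\mathbb{C}^{2n\times2n}$. If $\mathcal{M}=\mathcal{L}W$ for some nonsingular $W\in\mathbb{C}^{2n\times2n}$, then both $\mathcal{M}$ and $\mathcal{L}$ are invertible.
   Context: $\mathcal{J}=\begin{bmatrix}0&I_n\\-I_n&0\end{bmatrix}$. The pair $(\mathcal{M},\mathcal{L})$ is symplectic if $\mathcal{M}\mathcal{J}\mathcal{M}^H=\mathcal{L}\mathcal{J}\mathcal{L}^H$ and regular if $\det(\mathcal{M}-\lambda\mathcal{L})\ne0$ for some $\lambda\in\mathbb{C}$. *)

From HB Require Import structures.
From mathcomp Require Import all_boot all_order all_algebra.
From mathcomp Require Import complex.
From mathcomp Require Import reals.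
Set Implicit Arguments. Unset Strict Implicit. Unset Printing Implicit Defensive.
Import Order.TTheory GRing.Theory Num.Theory.
Local Open Scope ring_scope.

Definition ctrmx (C : numClosedFieldType) m n (A : 'M[C]_(m, n)) : 'M[C]_(n, m) :=
  (map_mx Num.conj A)^T.

Definition Jmx (C : numClosedFieldType) (n : nat) : 'M[C]_(n + n) :=
  block_mx 0 1%:M (- 1%:M) 0.

Definition symplectic_pair (C : numClosedFieldType) n (M L : 'M[C]_(n + n)) : Prop :=
  M *m Jmx C n *m ctrmx M = L *m Jmx C n *m ctrmx L.

Definition regular_pair (C : numClosedFieldType) n (M L : 'M[C]_(n + n)) : Prop :=
  exists lambda : C, \det (M - lambda *: L) != 0.

From HB Require Import structures.
From mathcomp Require Import all_boot all_order all_algebra.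
From mathcomp Require Import complex.
From mathcomp Require Import reals.
Import Order.TTheory GRing.Theory Num.Theory.
Local Open Scope ring_scope.
Local Open Scope complex_scope.

(* If M = L W then M - lambda L = L (W - lambda), so det L divides every
   det (M - lambda L); regularity forces det L <> 0, and then M = L W is a
   product of invertible matrices. *)

Lemma sub_scale_mulmx_right (K : comNzRingType) n (L W : 'M[K]_n) (lambda : K) :
  L *m W - lambda *: L = L *m (W - lambda%:M).
Proof. by rewrite mulmxBr mul_mx_scalar. Qed.

Lemma regular_right_multiple_unitmx {K : fieldType} {n} {M L W : 'M[K]_n}
    {lambda : K} :
  \det (M - lambda *: L) != 0 -> M = L *m W -> L \in unitmx.
Proof.
move=> det_pencil defM; rewrite unitmxE unitfE; apply: contraNneq det_pencil.
by move=> detL0; rewrite defM sub_scale_mulmx_right det_mulmx detL0 mul0r.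
Qed.

Theorem lemma2p5 (R : realType) (n : nat) (M L W : 'M[R[i]]_(n + n)) :
  symplectic_pair M L -> regular_pair M L ->
  W \in unitmx -> M = L *m W ->
  M \in unitmx /\ L \in unitmx.
Proof.
move=> _ [lambda det_pencil] unitW defM.
have unitL := regular_right_multiple_unitmx det_pencil defM.
by split=> //; rewrite defM unitmx_mul unitL unitW.
Qed.
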